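(* Let $\mathcal F=\{F^c_{t,k}\}$ be an F-system. Then for every even positive integer $t$, $|S_{2t}\setminus Z_{3t,2t}|\ge|S_t\cup Z_{3t/2,t}|+|S_{2t,t}|$.
   Context: F-system: a family $\mathcal F=\{F^c_{t,k}\}$ of sets of positive integers, indexed by $c\in\{A,B\}$ and integers $0<k\le t$, such that (F1) $|F^c_{t,k}|\ge k$ for all $c,t,k$; and (F2) $F^A_{t,k}\cap F^B_{t',k'}=\emptyset$ for all $k\le t$, $k'\le t'$ with $k+k'\le\max(t,t')$. Notation: $F^c_t=\bigcup_{0<\kappa\le\tau\le t}F^c_{\tau,\kappa}$ for $c\in\{A,B\}$; $S_t=F^A_t\cap F^B_t$; $S_{2t,t}=S_{2t}\cap(F^A_{2t,t}\cup F^B_{2t,t})$; for even $t$, $Z_{3t/2,t}=F^A_{3t/2,t}\cap F^B_{3t/2,t}$ (so also $Z_{3t,2t}=F^A_{3t,2t}\cap F^B_{3t,2t}$). *)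

From mathcomp Require Import all_boot.
Set Implicit Arguments. Unset Strict Implicit. Unset Printing Implicit Defensive.

Inductive colour := cA | cB.

(* A Ffamily of (possibly infinite) sets of positive integers F c t k,
   represented as predicates on nat; only indices 0 < k <= t matter. *)
Definition Ffamily := colour -> nat -> nat -> nat -> Prop.

(* Cardinal comparison |X| >= n  (n finite): an injection 'I_n -> X. *)
Definition card_ge (X : nat -> Prop) (n : nat) : Prop :=
  exists f : 'I_n -> {x : nat | X x}, injective f.

(* Cardinal inequality |X| >= |Y| + |W| (cardinal sum = disjoint union):
   an injection from Y (+) W into X. *)
Definition card_ge_sum (X Y W : nat -> Prop) : Prop :=
  exists f : {x : nat | Y x} + {x : nat | W x} -> {x : nat | X x}, injective f.

Definition is_Fsystem (F : Ffamily) : Prop :=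
  (forall c t k x, 0 < k -> k <= t -> F c t k x -> 0 < x) /\
  (forall c t k, 0 < k -> k <= t -> card_ge (F c t k) k) /\
  (forall t k t' k', 0 < k -> k <= t -> 0 < k' -> k' <= t' ->
     k + k' <= maxn t t' -> forall x, F cA t k x -> F cB t' k' x -> False).

Definition Fup (F : Ffamily) (c : colour) (t : nat) (x : nat) : Prop :=
  exists tau kappa, 0 < kappa /\ kappa <= tau /\ tau <= t /\ F c tau kappa x.

Definition Sset (F : Ffamily) (t : nat) (x : nat) : Prop :=
  Fup F cA t x /\ Fup F cB t x.

Definition S2 (F : Ffamily) (t : nat) (x : nat) : Prop :=
  Sset F (2 * t) x /\ (F cA (2 * t) t x \/ F cB (2 * t) t x).

Definition Zset (F : Ffamily) (s k : nat) (x : nat) : Prop :=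
  F cA s k x /\ F cB s k x.

(** Each of [S_t], [Z_{3t/2,t}] and [S_{2t,t}] lies in [S_{2t}] and misses
   [Z_{3t,2t}], and the first two are disjoint from [S_{2t,t}]; so the
   inclusion map injects their disjoint union into [S_{2t} \ Z_{3t,2t}].
   Every one of these facts is an instance of (F2): the two indices [k, k']
   involved always satisfy [k + k' <= max(t, t')]. *)

From Stdlib Require Import ProofIrrelevance.
From mathcomp Require Import all_boot zify.

Set Implicit Arguments.
Unset Strict Implicit.

Lemma card_ge_sum_of_subsets (X Y W : nat -> Prop) :
  (forall x, Y x -> X x) -> (forall x, W x -> X x) ->
  (forall x, Y x -> W x -> False) ->
  card_ge_sum X Y W.
Proof.
move=> YX WX YW.
exists (fun u => match u with
  | inl y => exist X (sval y) (YX _ (svalP y))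
  | inr w => exist X (sval w) (WX _ (svalP w)) end).
move=> [[y Yy]|[y Wy]] [[z Yz]|[z Wz]] /= /(congr1 sval) /= eq_yz; subst z.
- by rewrite (subset_eq_compat _ _ _ _ Yy Yz).
- by case: (YW _ Yy Wz).
- by case: (YW _ Yz Wy).
- by rewrite (subset_eq_compat _ _ _ _ Wy Wz).
Qed.

Section FsystemInclusions.

Variable F : Ffamily.

Lemma Fup_mono c t t' x : t <= t' -> Fup F c t x -> Fup F c t' x.
Proof.
move=> le_tt' [tau [kappa [kappa_gt0 [le_kappa_tau [le_tau_t Fx]]]]].
by exists tau, kappa; do !split => //; apply: leq_trans le_tau_t le_tt'.
Qed.

Lemma Sset_mono t t' x : t <= t' -> Sset F t x -> Sset F t' x.
Proof. by move=> le_tt' [Ax Bx]; split; apply: Fup_mono le_tt' _. Qed.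

Lemma Zset_sub_Sset s k t x :
  0 < k -> k <= s -> s <= t -> Zset F s k x -> Sset F t x.
Proof. by move=> ? ? ? [Ax Bx]; split; exists s, k. Qed.

End FsystemInclusions.

Section FsystemDisjointness.

Variables (F : Ffamily) (hF : is_Fsystem F).

Lemma FA_Fup_disjoint t k s x :
  0 < k -> k <= t -> k + s <= t -> F cA t k x -> Fup F cB s x -> False.
Proof.
move=> k_gt0 le_kt le_kst Ax [tau [kappa [kappa_gt0 [le_kappa_tau [le_tau_s Bx]]]]].
by apply: (hF.2.2 _ _ _ _ k_gt0 le_kt kappa_gt0 le_kappa_tau _ _ Ax Bx); lia.
Qed.

Lemma Fup_FB_disjoint t k s x :
  0 < k -> k <= t -> k + s <= t -> Fup F cA s x -> F cB t k x -> False.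
Proof.
move=> k_gt0 le_kt le_kst [tau [kappa [kappa_gt0 [le_kappa_tau [le_tau_s Ax]]]]] Bx.
by apply: (hF.2.2 _ _ _ _ kappa_gt0 le_kappa_tau k_gt0 le_kt _ _ Ax Bx); lia.
Qed.

Lemma Sset_notin_Zset t x : 0 < t -> Sset F t x -> ~ Zset F (3 * t) (2 * t) x.
Proof.
move=> t_gt0 [_ Bx] [Ax _].
by apply: (FA_Fup_disjoint _ _ _ Ax Bx); lia.
Qed.

Lemma Zset_notin_Zset s t x :
  0 < t -> t <= s -> Zset F s t x -> ~ Zset F (3 * t) (2 * t) x.
Proof.
move=> t_gt0 le_ts [_ Bx] [Ax _].
by apply: (hF.2.2 _ _ _ _ _ _ t_gt0 le_ts _ _ Ax Bx); lia.
Qed.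

Lemma S2_notin_Zset t x : 0 < t -> S2 F t x -> ~ Zset F (3 * t) (2 * t) x.
Proof.
move=> t_gt0 [_ [Ax|Bx]] [Ax' Bx'].
- by apply: (hF.2.2 _ _ _ _ t_gt0 _ _ _ _ _ Ax Bx'); lia.
- by apply: (hF.2.2 _ _ _ _ _ _ t_gt0 _ _ _ Ax' Bx); lia.
Qed.

Lemma Sset_S2_disjoint t x : 0 < t -> Sset F t x -> S2 F t x -> False.
Proof.
move=> t_gt0 [Ax Bx] [_ [Ax'|Bx']].
- by apply: (FA_Fup_disjoint t_gt0 _ _ Ax' Bx); lia.
- by apply: (Fup_FB_disjoint t_gt0 _ _ Ax Bx'); lia.
Qed.

Lemma Zset_S2_disjoint s t x :
  0 < t -> t <= s -> Zset F s t x -> S2 F t x -> False.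
Proof.
move=> t_gt0 le_ts [Ax Bx] [_ [Ax'|Bx']].
- by apply: (hF.2.2 _ _ _ _ t_gt0 _ t_gt0 le_ts _ _ Ax' Bx); lia.
- by apply: (hF.2.2 _ _ _ _ t_gt0 le_ts t_gt0 _ _ _ Ax Bx'); lia.
Qed.

End FsystemDisjointness.

Unset Implicit Arguments.

Theorem lemma4 (F : Ffamily) (hF : is_Fsystem F) (t : nat)
  (ht : 0 < t) (hev : ~~ odd t) :
  card_ge_sum
    (fun x => Sset F (2 * t) x /\ ~ Zset F (3 * t) (2 * t) x)
    (fun x => Sset F t x \/ Zset F ((3 * t) %/ 2) t x)
    (S2 F t).
Proof.
have le_t_s : t <= (3 * t) %/ 2 by lia.
have le_s_2t : (3 * t) %/ 2 <= 2 * t by lia.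
apply: card_ge_sum_of_subsets => x.
- case=> [Sx|Zx]; split.
  + by apply: Sset_mono Sx; lia.
  + exact: Sset_notin_Zset.
  + exact: Zset_sub_Sset ht le_t_s le_s_2t Zx.
  + exact: Zset_notin_Zset Zx.
- by move=> S2x; split; [case: S2x | exact: S2_notin_Zset].
- by case=> [Sx|Zx]; [exact: Sset_S2_disjoint Sx | exact: Zset_S2_disjoint Zx].
Qed.
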